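(* Let $x,y,z$ be nodes of a finite, connected, unweighted, undirected graph and let $m$ be a generalized median of $\{x,y,z\}$. Then for every node $p\in I_{xm}$, $d(y,p)\geq d(y,m)$.
   Context: $d$ is the shortest-path distance; $I_{xm}=\{w: d(x,w)+d(w,m)=d(x,m)\}$. A generalized median of $\{x,y,z\}$ is a node minimizing $d(u,x)+d(u,y)+d(u,z)$ over all nodes $u$. *)

(* A finite undirected unweighted graph is a symmetric,
   irreflexive relation e on a finType T. *)
From mathcomp Require Import all_boot.
Set Implicit Arguments. Unset Strict Implicit. Unset Printing Implicit Defensive.

Section Graph.
Variables (T : finType) (e : rel T).

Definition walkb (n : nat) (x y : T) : bool :=
  [exists p : n.-tuple T, path e x p && (last x p == y)].

(* shortest-path distance: least n with a walk of length n
   (for a connected graph this is always < #|T|) *)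
Definition gdist (x y : T) : nat :=
  find (fun n => walkb n x y) (iota 0 #|T|).

Definition interval (x m : T) : {set T} :=
  [set w | gdist x w + gdist w m == gdist x m].

Definition gen_median (x y z m : T) : Prop :=
  forall u : T, gdist m x + gdist m y + gdist m z <= gdist u x + gdist u y + gdist u z.

Definition connected_graph : Prop := forall x y : T, connect e x y.
End Graph.

(* Moving from m to a point p of I_{xm} shortens the distance to x by exactly
   d(p, m), and by the triangle inequality lengthens the distance to z by at
   most d(p, m).  Since m minimises the sum of the three distances, the
   distance to y cannot decrease. *)
From mathcomp Require Import all_boot.
From mathcomp Require Import zify.
Set Implicit Arguments.

Section Walks.
Variables (T : finType) (e : rel T).

Lemma walkbP n x y :
  reflect (exists p, [/\ size p = n, path e x p & last x p = y]) (walkb e n x y).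
Proof.
apply: (iffP existsP) => [[t /andP[ep /eqP <-]] | [p [sz ep <-]]].
  by exists (val t); rewrite size_tuple.
have sz' : size p == n by rewrite sz.
by exists (Tuple sz'); rewrite /= ep eqxx.
Qed.

Lemma walkb_cat n k x y z :
  walkb e n x y -> walkb e k y z -> walkb e (n + k) x z.
Proof.
move=> /walkbP[p [<- ep lp]] /walkbP[q [<- eq <-]].
by apply/walkbP; exists (p ++ q); rewrite size_cat cat_path ep lp eq last_cat lp.
Qed.

Hypothesis e_sym : symmetric e.

Lemma walkb_rev n x y : walkb e n x y -> walkb e n y x.
Proof.
move=> /walkbP[p [<- ep lp]]; apply/walkbP.
exists (rev (belast x p)); split.
- by rewrite size_rev size_belast.
- by rewrite -lp rev_path (eq_path (_ : _ =2 e)) // => a b /=; rewrite e_sym.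
- by case: p {ep} lp => [|a q] //= <-; rewrite rev_cons last_rcons.
Qed.

End Walks.

Section Distance.
Variables (T : finType) (e : rel T).
Hypothesis e_conn : connected_graph e.

Lemma walkb_lt_card x y : exists2 n, n < #|T| & walkb e n x y.
Proof.
have /connectP[p ep ->] := e_conn x y.
have [q eq uq _] := shortenP ep.
exists (size q); last by apply/walkbP; exists q.
by have := max_card (mem (x :: q)); rewrite (card_uniqP uq).
Qed.

Lemma gdist_lt_card x y : gdist e x y < #|T|.
Proof.
have [n ltn wn] := walkb_lt_card x y.
rewrite /gdist -{2}(size_iota 0 #|T|) -has_find.
by apply/hasP; exists n; rewrite ?mem_iota.
Qed.

Lemma walkb_gdist x y : walkb e (gdist e x y) x y.
Proof.
have has_walk : has (fun n => walkb e n x y) (iota 0 #|T|).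
  by rewrite has_find size_iota gdist_lt_card.
by have := nth_find 0 has_walk; rewrite nth_iota ?gdist_lt_card.
Qed.

Lemma gdist_min n x y : walkb e n x y -> gdist e x y <= n.
Proof.
move=> wn; have lt_d := gdist_lt_card x y.
have [le_Tn | lt_nT] := leqP #|T| n; first exact: ltnW (leq_trans lt_d le_Tn).
rewrite leqNgt; apply/negP => lt_nd.
by have := before_find 0 lt_nd; rewrite nth_iota // add0n wn.
Qed.

Lemma gdist_triangle x y z : gdist e x z <= gdist e x y + gdist e y z.
Proof. exact/gdist_min/walkb_cat/walkb_gdist/walkb_gdist. Qed.

Hypothesis e_sym : symmetric e.

Lemma gdistC x y : gdist e x y = gdist e y x.
Proof.
by apply/eqP; rewrite eqn_leq !gdist_min // walkb_rev // walkb_gdist.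
Qed.

End Distance.

Theorem lemmaE3 (T : finType) (e : rel T)
  (e_sym : symmetric e) (e_irr : irreflexive e)
  (e_conn : connected_graph e)
  (x y z m : T) (hm : gen_median e x y z m) :
  forall p : T, p \in interval e x m -> gdist e y m <= gdist e y p.
Proof.
move=> p; rewrite inE => /eqP d_xm.
have median_p := hm p.
have d_pz := gdist_triangle e_conn p m z.
have dC := gdistC e_conn e_sym.
rewrite (dC m x) (dC p x) in median_p.
rewrite (dC y m) (dC y p).
lia.
Qed.
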